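(* $\mathbf S(\mathbf{pAND}\cup\mathbf{11tAND}\cup\mathbf{11pOR}\cup\mathbf{tOR})\supsetneq\mathbf S(\mathbf{pAND}\cup\mathbf{11tAND}\cup\mathbf{tOR})$; in particular, there is a one-input one-output pOR net that does not belong to $\mathbf S(\mathbf{pAND}\cup\mathbf{11tAND}\cup\mathbf{tOR})$.
   Context: Petri nets: $(P,T,F)$ with finite disjoint places $P$, transitions $T$, flow edges $F\subseteq(P\times T)\cup(T\times P)$; $\bullet x=\{y\mid(y,x)\in F\}$, $x\bullet=\{y\mid(x,y)\in F\}$. Workflow nets. A pWF net is $(P,T,F,I,O)$ with $(P,T,F)$ a Petri net, $I,O\subseteq P$ non-empty, every node reachable by a directed path from some node of $I$, and some node of $O$ reachable from every node. A tWF net is the same with $I,O$ non-empty subsets of $T$. Input nodes may have incoming edges and output nodes outgoing edges. A WF net is a pWF or tWF net; it is one-input (one-output) if $|I|=1$ ($|O|=1$). Substitution. Let $N=(P,T,F,I,O)$ and $M=(P',T',F',I',O')$ be WF nets with disjoint node sets. If $p\in P$ and $M$ is a pWF net, $N\otimes_p M$ is obtained from $N$ by deleting $p$ and all edges incident to $p$, adding all nodes and edges of $M$, adding an edge $(t,p')$ for each $t\in\bullet_N p$ and each $p'\in I'$, and an edge $(p',t)$ for each $p'\in O'$ and each $t\in p\bullet_N$; its input set is $(I\setminus\{p\})\cup I'$ if $p\in I$ and $I$ otherwise, and its output set is $(O\setminus\{p\})\cup O'$ if $p\in O$ and $O$ otherwise. If $t\in T$ and $M$ is a tWF net, $N\otimes_t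 M$ is defined analogously: delete $t$ and its edges, add $M$, add $(q,t')$ for each $q\in\bullet_N t$, $t'\in I'$, and $(t',q)$ for each $t'\in O'$, $q\in t\bullet_N$, with input/output sets updated in the same way. The substitution closure $\mathbf S(C)$ of a class $C$ of WF nets is the smallest superclass of $C$ such that whenever $N,M\in\mathbf S(C)$ are disjoint, $N\otimes_p M\in\mathbf S(C)$ for every place $p$ of $N$ if $M$ is a pWF net, and $N\otimes_t M\in\mathbf S(C)$ for every transition $t$ of $N$ if $M$ is a tWF net. AND and OR nets. An AND net is an acyclic WF net $(P,T,F,I,O)$ such that for every place $p$: (1) either $p\in I$ and $|\bullet p|=0$, or $p\notin I$ and $|\bullet p|=1$; and (2) either $p\in O$ and $|p\bullet|=0$, or $p\notin O$ and $|p\bullet|=1$. An OR net is a (possibly cyclic) WF net such that for every transition $t$: (1) either $t\in I$ and $|\bullet t|=0$, or $t\notin I$ and $|\bullet t|=1$; and (2) either $t\in O$ and $|t\bullet|=0$, or $t\notin O$ and $|t\bullet|=1$. A pAND (tAND, pOR, tOR) net is an AND (AND, OR, OR) net that is a pWF (tWF, pWF, tWF) net. $\mathbf{pAND}$ is the class of pAND nets, $\mathbf{11tAND}$ the class of one-input one-output tAND nets, $\mathbf{11pOR}$ the class of one-input one-output pOR nets, and $\mathbf{tOR}$ the class of tOR nets. *)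

(* Nodes of nets are natural numbers; a net is given by
   characteristic functions, so Leibniz equality of nets (with functional
   extensionality) is equality of the underlying sets. *)
From Stdlib Require Import Arith Relations Bool.
Open Scope bool_scope.

Record net := Net {
  plc : nat -> bool;
  trn : nat -> bool;
  flw : nat -> nat -> bool;
  inp : nat -> bool;
  out : nat -> bool
}.

Definition node (N : net) (x : nat) : bool := plc N x || trn N x.
Definition edge (N : net) (x y : nat) : Prop := flw N x y = true.

Definition petri_ok (N : net) : Prop :=
  (forall x, ~ (plc N x = true /\ trn N x = true)) /\
  (exists n, forall x, node N x = true -> x < n) /\
  (forall x y, flw N x y = true ->
     (plc N x = true /\ trn N y = true) \/ (trn N x = true /\ plc N y = true)).

Definition reach (N : net) : nat -> nat -> Prop := clos_refl_trans nat (edge N).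

Definition wf_common (N : net) : Prop :=
  petri_ok N /\
  (exists x, inp N x = true) /\ (exists x, out N x = true) /\
  (forall x, node N x = true -> exists i, inp N i = true /\ reach N i x) /\
  (forall x, node N x = true -> exists o, out N o = true /\ reach N x o).

Definition pWF (N : net) : Prop :=
  wf_common N /\
  (forall x, inp N x = true -> plc N x = true) /\
  (forall x, out N x = true -> plc N x = true).

Definition tWF (N : net) : Prop :=
  wf_common N /\
  (forall x, inp N x = true -> trn N x = true) /\
  (forall x, out N x = true -> trn N x = true).

Definition WF (N : net) : Prop := pWF N \/ tWF N.

Definition one_input (N : net) : Prop :=
  exists i, inp N i = true /\ forall j, inp N j = true -> j = i.
Definition one_output (N : net) : Prop :=
  exists o, out N o = true /\ forall j, out N j = true -> j = o.

Definition acyclic (N : net) : Prop := forall x, ~ clos_trans nat (edge N) x x.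

Definition no_pre (N : net) x : Prop := forall y, flw N y x = false.
Definition one_pre (N : net) x : Prop :=
  exists y, flw N y x = true /\ forall z, flw N z x = true -> z = y.
Definition no_post (N : net) x : Prop := forall y, flw N x y = false.
Definition one_post (N : net) x : Prop :=
  exists y, flw N x y = true /\ forall z, flw N x z = true -> z = y.

Definition node_cond (N : net) x : Prop :=
  ((inp N x = true /\ no_pre N x) \/ (inp N x = false /\ one_pre N x)) /\
  ((out N x = true /\ no_post N x) \/ (out N x = false /\ one_post N x)).

Definition AND_net (N : net) : Prop :=
  WF N /\ acyclic N /\ forall p, plc N p = true -> node_cond N p.

Definition OR_net (N : net) : Prop :=
  WF N /\ forall t, trn N t = true -> node_cond N t.

Definition pAND (N : net) : Prop := AND_net N /\ pWF N.
Definition tAND11 (N : net) : Prop := AND_net N /\ tWF N /\ one_input N /\ one_output N.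
Definition pOR11 (N : net) : Prop := OR_net N /\ pWF N /\ one_input N /\ one_output N.
Definition tOR (N : net) : Prop := OR_net N /\ tWF N.

Definition disjoint_nets (N M : net) : Prop :=
  forall x, ~ (node N x = true /\ node M x = true).

(* N (x) _v M : delete node v of N, add M, connect pre(v) to I_M and O_M to post(v). *)
Definition subst (N : net) (v : nat) (M : net) : net :=
  let keep x := negb (Nat.eqb x v) in
  {| plc := fun x => (plc N x && keep x) || plc M x;
     trn := fun x => (trn N x && keep x) || trn M x;
     flw := fun x y => (flw N x y && keep x && keep y) || flw M x y
                       || (flw N x v && inp M y) || (out M x && flw N v y);
     inp := if inp N v then (fun x => (inp N x && keep x) || inp M x) else inp N;
     out := if out N v then (fun x => (out N x && keep x) || out M x) else out N |}.

Inductive SC (C : net -> Prop) : net -> Prop :=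
| SC_base : forall N, C N -> SC C N
| SC_place : forall N M p, SC C N -> SC C M -> disjoint_nets N M ->
    pWF M -> plc N p = true -> SC C (subst N p M)
| SC_trans : forall N M t, SC C N -> SC C M -> disjoint_nets N M ->
    tWF M -> trn N t = true -> SC C (subst N t M).

Definition class_big (N : net) : Prop := pAND N \/ tAND11 N \/ pOR11 N \/ tOR N.
Definition class_small (N : net) : Prop := pAND N \/ tAND11 N \/ tOR N.

From Stdlib Require Import Arith Relations Bool Lia.

(* Strictness rests on an invariant: "every input place has an empty preset".
   It holds for all WF nets of the smaller base class (input places of pAND
   nets are sources, and tAND/tOR nets have no input places at all), and it is
   preserved by substitution of a WF net for a node of matching kind, provided
   both nets are "well placed": flow edges join two distinct nodes, and inputs
   and outputs are nodes.  Well-placedness itself is stable under substitution, so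
   every net of S(C) satisfies both properties as soon as the base class C
   consists of WF nets with source inputs.

   The witness is the one-input one-output pOR cycle 0 -> 1 -> 2 -> 3 -> 0
   (places 0, 2; transitions 1, 3) with input place 0, whose preset is {3}. *)

Lemma SC_monotone (C D : net -> Prop) :
  (forall N, C N -> D N) -> forall N, SC C N -> SC D N.
Proof.
  intros HCD N HN; induction HN.
  - apply SC_base, HCD; assumption.
  - apply SC_place; assumption.
  - apply SC_trans; assumption.
Qed.

Definition source_inputs (N : net) : Prop :=
  forall x, inp N x = true -> plc N x = true -> no_pre N x.

Definition well_placed (N : net) : Prop :=
  (forall x y, flw N x y = true -> node N x = true /\ node N y = true /\ x <> y) /\
  (forall x, inp N x = true -> node N x = true) /\
  (forall x, out N x = true -> node N x = true).

Lemma node_of_plc (N : net) x : plc N x = true -> node N x = true.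
Proof. unfold node; intros H; rewrite H; reflexivity. Qed.

Lemma node_of_trn (N : net) x : trn N x = true -> node N x = true.
Proof. unfold node; intros H; rewrite H, orb_true_r; reflexivity. Qed.

Lemma WF_petri_ok (N : net) : WF N -> petri_ok N.
Proof. intros [[[H _] _] | [[H _] _]]; exact H. Qed.

(* A WF net is well placed: its flow is bipartite between disjoint P and T. *)
Lemma WF_well_placed (N : net) : WF N -> well_placed N.
Proof.
  intros HW.
  destruct (WF_petri_ok N HW) as [Hdisj [_ Htyped]].
  split.
  - intros x y Hxy.
    destruct (Htyped x y Hxy) as [[Hx Hy] | [Hx Hy]];
      (split; [|split]); auto using node_of_plc, node_of_trn;
      intros <-; apply (Hdisj x); auto.
  - destruct HW as [[_ [Hi Ho]] | [_ [Hi Ho]]];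
      split; intros x Hx; auto using node_of_plc, node_of_trn.
Qed.

Lemma class_small_source_inputs (N : net) :
  class_small N -> WF N /\ source_inputs N.
Proof.
  intros [[[HW [_ Hcond]] _] | [[[HW _] [[_ [Hi _]] _]] | [[HW _] [_ [Hi _]]]]];
    split; auto; intros x Hx Hp.
  - destruct (Hcond x Hp) as [[[_ H] | [Hx' _]] _]; [exact H | congruence].
  - destruct (WF_petri_ok N HW) as [Hdisj _]; exfalso; apply (Hdisj x); auto.
  - destruct (WF_petri_ok N HW) as [Hdisj _]; exfalso; apply (Hdisj x); auto.
Qed.

Section Substitution.

Variables (N M : net) (v : nat).

Lemma node_subst x :
  (node N x = true /\ x <> v) \/ node M x = true -> node (subst N v M) x = true.
Proof.
  unfold node, subst; simpl.
  rewrite !orb_true_iff, !andb_true_iff, !negb_true_iff, !Nat.eqb_neq; tauto.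
Qed.

Lemma plc_subst_inv x :
  plc (subst N v M) x = true -> (plc N x = true /\ x <> v) \/ plc M x = true.
Proof.
  simpl; rewrite orb_true_iff, andb_true_iff, negb_true_iff, Nat.eqb_neq; tauto.
Qed.

Lemma flw_subst_inv x y :
  flw (subst N v M) x y = true ->
  (flw N x y = true /\ x <> v /\ y <> v) \/ flw M x y = true \/
  (flw N x v = true /\ inp M y = true) \/ (out M x = true /\ flw N v y = true).
Proof.
  simpl; rewrite !orb_true_iff, !andb_true_iff, !negb_true_iff, !Nat.eqb_neq; tauto.
Qed.

Lemma inp_subst_inv x :
  inp (subst N v M) x = true ->
  (inp N x = true /\ x <> v) \/ (inp N v = true /\ inp M x = true).
Proof.
  simpl; destruct (inp N v) eqn:Hv.
  - rewrite orb_true_iff, andb_true_iff, negb_true_iff, Nat.eqb_neq; tauto.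
  - intros Hx; left; split; [exact Hx | intros ->; congruence].
Qed.

Lemma out_subst_inv x :
  out (subst N v M) x = true -> (out N x = true /\ x <> v) \/ out M x = true.
Proof.
  simpl; destruct (out N v) eqn:Hv.
  - rewrite orb_true_iff, andb_true_iff, negb_true_iff, Nat.eqb_neq; tauto.
  - intros Hx; left; split; [exact Hx | intros ->; congruence].
Qed.

Hypotheses (HN : well_placed N) (HM : well_placed M) (Hdisj : disjoint_nets N M).

Lemma not_node_M x : node N x = true -> node M x = false.
Proof. intros Hx; apply not_true_iff_false; intros Hx'; apply (Hdisj x); auto. Qed.

Lemma not_node_N x : node M x = true -> node N x = false.
Proof. intros Hx; apply not_true_iff_false; intros Hx'; apply (Hdisj x); auto. Qed.

Lemma subst_well_placed : well_placed (subst N v M).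
Proof.
  destruct HN as [HNf [HNi HNo]], HM as [HMf [HMi HMo]].
  split; [| split].
  - intros x y Hxy.
    destruct (flw_subst_inv x y Hxy)
      as [[H [Hxv Hyv]] | [H | [[H Hy] | [Hx H]]]].
    + destruct (HNf x y H) as [Hx [Hy Hne]]; repeat split; auto using node_subst.
    + destruct (HMf x y H) as [Hx [Hy Hne]]; repeat split; auto using node_subst.
    + destruct (HNf x v H) as [Hx [_ Hxv]].
      pose proof (HMi y Hy) as HyM.
      repeat split; auto using node_subst.
      intros <-; rewrite (not_node_M x Hx) in HyM; discriminate.
    + destruct (HNf v y H) as [_ [Hy Hvy]].
      pose proof (HMo x Hx) as HxM.
      repeat split; auto using node_subst.
      intros <-; rewrite (not_node_M x Hy) in HxM; discriminate.
  - intros x Hx.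
    destruct (inp_subst_inv x Hx) as [[H Hxv] | [_ H]]; auto using node_subst.
  - intros x Hx.
    destruct (out_subst_inv x Hx) as [[H Hxv] | H]; auto using node_subst.
Qed.

Lemma subst_source_inputs :
  source_inputs N -> source_inputs M ->
  (pWF M /\ plc N v = true) \/ (tWF M /\ trn N v = true) ->
  source_inputs (subst N v M).
Proof.
  destruct HN as [HNf [HNi _]], HM as [HMf [HMi _]].
  intros SN SM Hkind x Hin Hpl y.
  apply not_true_iff_false; intros Hyx.
  destruct (inp_subst_inv x Hin) as [[HinN _] | [HvN HinM]].
  - (* x is an input place of N other than v, hence outside M *)
    pose proof (not_node_M x (HNi x HinN)) as HxM.
    assert (HpN : plc N x = true).
    { destruct (plc_subst_inv x Hpl) as [[H _] | H]; [exact H |].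
      rewrite (node_of_plc M x H) in HxM; discriminate. }
    pose proof (SN x HinN HpN) as Hsrc.
    destruct (flw_subst_inv y x Hyx) as [[H _] | [H | [[_ H] | [_ H]]]].
    + rewrite Hsrc in H; discriminate.
    + destruct (HMf y x H) as [_ [H' _]]; congruence.
    + rewrite (HMi x H) in HxM; discriminate.
    + rewrite Hsrc in H; discriminate.
  - (* x is an input of M, hence outside N *)
    pose proof (not_node_N x (HMi x HinM)) as HxN.
    assert (HpM : plc M x = true).
    { destruct (plc_subst_inv x Hpl) as [[H _] | H]; [| exact H].
      rewrite (node_of_plc N x H) in HxN; discriminate. }
    destruct (flw_subst_inv y x Hyx) as [[H _] | [H | [[H _] | [_ H]]]].
    + destruct (HNf y x H) as [_ [H' _]]; congruence.
    + rewrite (SM x HinM HpM y) in H; discriminate.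
    + destruct Hkind as [[_ HvP] | [HtWF _]].
      * rewrite (SN v HvN HvP y) in H; discriminate.
      * (* inputs of a tWF net are transitions, not places *)
        destruct (WF_petri_ok M (or_intror HtWF)) as [HMdisj _].
        apply (HMdisj x); split; [exact HpM | apply (proj1 (proj2 HtWF)), HinM].
    + destruct (HNf v x H) as [_ [H' _]]; congruence.
Qed.

End Substitution.

Lemma SC_source_inputs (C : net -> Prop) :
  (forall N, C N -> WF N /\ source_inputs N) ->
  forall N, SC C N -> well_placed N /\ source_inputs N.
Proof.
  intros Hbase N HN; induction HN as
    [N HC | N M p _ [WPN SN] _ [WPM SM] Hdisj HpWF Hp
          | N M t _ [WPN SN] _ [WPM SM] Hdisj HtWF Ht].
  - destruct (Hbase N HC) as [HW HS]; auto using WF_well_placed.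
  - split; auto using subst_well_placed, subst_source_inputs.
  - split; auto using subst_well_placed, subst_source_inputs.
Qed.

Definition cycle4 : net := {|
  plc := fun x => (x =? 0) || (x =? 2);
  trn := fun x => (x =? 1) || (x =? 3);
  flw := fun x y => match x, y with
                    | 0, 1 | 1, 2 | 2, 3 | 3, 0 => true
                    | _, _ => false end;
  inp := fun x => x =? 0;
  out := fun x => x =? 2 |}.

Lemma cycle4_node x : node cycle4 x = true -> x < 4.
Proof. unfold node; simpl. destruct x as [|[|[|[|x]]]]; simpl; try lia; discriminate. Qed.

Lemma cycle4_reach x y : x < 4 -> y < 4 -> reach cycle4 x y.
Proof.
  assert (Hstep : forall z, z < 4 -> reach cycle4 z (S z mod 4)).
  { intros z Hz; apply rt_step. destruct z as [|[|[|[|z]]]]; try reflexivity; lia. }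
  intros Hx Hy.
  destruct x as [|[|[|[|x]]]]; try lia; destruct y as [|[|[|[|y]]]]; try lia;
    repeat (first [apply rt_refl | eapply rt_trans; [apply Hstep; lia | simpl]]).
Qed.

Lemma cycle4_pWF : pWF cycle4.
Proof.
  split; [split; [split; [|split]|split; [|split; [|split]]]|split].
  - intros x; destruct x as [|[|[|[|x]]]]; simpl; intros [A B]; discriminate.
  - exists 4; apply cycle4_node.
  - intros x y; destruct x as [|[|[|[|x]]]]; destruct y as [|[|[|[|y]]]]; simpl;
      intros H; try discriminate; auto.
  - exists 0; reflexivity.
  - exists 2; reflexivity.
  - intros x Hx; exists 0; split; [reflexivity |].
    apply cycle4_reach; [lia | apply cycle4_node, Hx].
  - intros x Hx; exists 2; split; [reflexivity |].
    apply cycle4_reach; [apply cycle4_node, Hx | lia].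
  - intros x; destruct x; simpl; auto; discriminate.
  - intros x; destruct x as [|[|[|x]]]; simpl; auto; discriminate.
Qed.

Lemma cycle4_pOR11 : pOR11 cycle4.
Proof.
  assert (Hone : forall t a b, flw cycle4 a t = true -> flw cycle4 t b = true ->
            inp cycle4 t = false -> out cycle4 t = false -> node_cond cycle4 t).
  { intros t a b Ha Hb Hi Ho; split; right; split; auto.
    - exists a; split; auto; intros z Hz.
      destruct t as [|[|[|[|t]]]], a as [|[|[|[|a]]]], z as [|[|[|[|z]]]];
        simpl in *; congruence.
    - exists b; split; auto; intros z Hz.
      destruct t as [|[|[|[|t]]]], b as [|[|[|[|b]]]], z as [|[|[|[|z]]]];
        simpl in *; congruence. }
  split; [split|split; [|split]].
  - left; apply cycle4_pWF.
  - intros t Ht; destruct t as [|[|[|[|t]]]]; simpl in Ht; try discriminate.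
    + apply (Hone 1 0 2); reflexivity.
    + apply (Hone 3 2 0); reflexivity.
  - apply cycle4_pWF.
  - exists 0; split; [reflexivity | intros j Hj; apply Nat.eqb_eq, Hj].
  - exists 2; split; [reflexivity | intros j Hj; apply Nat.eqb_eq, Hj].
Qed.

(* The input place 0 of the cycle has the predecessor 3. *)
Lemma cycle4_not_small : ~ SC class_small cycle4.
Proof.
  intros H.
  destruct (SC_source_inputs class_small class_small_source_inputs cycle4 H)
    as [_ Hsrc].
  specialize (Hsrc 0 eq_refl eq_refl 3); discriminate.
Qed.

Theorem mainTheorem3 :
  (forall N, SC class_small N -> SC class_big N) /\
  (exists N, SC class_big N /\ ~ SC class_small N) /\
  (exists N, pOR11 N /\ ~ SC class_small N).
Proof.
  assert (Hbig : SC class_big cycle4)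
    by (apply SC_base; right; right; left; exact cycle4_pOR11).
  split; [| split].
  - apply SC_monotone; unfold class_small, class_big; tauto.
  - exists cycle4; split; [exact Hbig | exact cycle4_not_small].
  - exists cycle4; split; [exact cycle4_pOR11 | exact cycle4_not_small].
Qed.
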